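(* The Banach space $Y$ (the predual of $\mathcal{F}(\mathcal{M})$ described in the context) is almost square: for every finite family $f_1,\dots,f_N\in S_Y$ and every $\varepsilon>0$ there exists $g\in S_Y$ with $\|f_i\pm g\|\le 1+\varepsilon$ for all $i=1,\dots,N$.
   Context: For a pointed metric space $M$, ${\mathrm{Lip}}_0(M)$ is the space of real Lipschitz functions vanishing at the base point, normed by the Lipschitz constant $\|\cdot\|_L$. A function $f$ on a metric space is locally flat if $\lim_{x,y\to z}\frac{f(x)-f(y)}{d(x,y)}=0$ for every $z$. Let $p=(0,0)$, $q=(1,0)$, $S_n=\{(2^{-n}k,2^{-n}):k=0,\dots,2^n\}$ for $n\in\mathbb{N}$, and $\mathcal{M}=\{p,q\}\cup\bigcup_n S_n$ with the metric $d((x_1,y_1),(x_2,y_2))=|x_1-x_2|$ if $y_1=y_2$ and $=|y_1-y_2|+\min\{x_1+x_2,2-(x_1+x_2)\}$ if $y_1\neq y_2$, base point $p$. Let $V=\{(x,y)\in\mathcal{M}:x\in\{0,1\}\}$, $h(x,y)=x$, and $Y=\{f\in{\mathrm{Lip}}_0(\mathcal{M}):\lim_n\|(f-f(q)h)|_{S_n}\|_L=0,\ f|_V\text{ locally flat}\}$ with the Lipschitz norm. *)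

From Stdlib Require Import Reals Lra.
From Coquelicot Require Import Coquelicot.
Open Scope R_scope.

Definition pt := (R * R)%type.

Definition dM (a b : pt) : R :=
  let (x1, y1) := a in let (x2, y2) := b in
  if Req_EM_T y1 y2 then Rabs (x1 - x2)
  else Rabs (y1 - y2) + Rmin (x1 + x2) (2 - (x1 + x2)).

Definition p0 : pt := (0, 0).
Definition q0 : pt := (1, 0).

Definition Sn (n : nat) (a : pt) : Prop :=
  exists k : nat, (k <= 2 ^ n)%nat /\ a = (INR k / 2 ^ n, / 2 ^ n).

Definition inM (a : pt) : Prop :=
  a = p0 \/ a = q0 \/ exists n : nat, (1 <= n)%nat /\ Sn n a.

Definition inV (a : pt) : Prop := inM a /\ (fst a = 0 \/ fst a = 1).

Definition hfun (a : pt) : R := fst a.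

Definition lipnorm (A : pt -> Prop) (f : pt -> R) : Rbar :=
  Lub_Rbar (fun r => exists a b, A a /\ A b /\ a <> b /\
                       r = Rabs (f a - f b) / dM a b).

Definition locally_flat (A : pt -> Prop) (f : pt -> R) : Prop :=
  forall z, A z -> forall eps, 0 < eps -> exists delta, 0 < delta /\
    forall a b, A a -> A b -> a <> b -> dM a z < delta -> dM b z < delta ->
      Rabs ((f a - f b) / dM a b) <= eps.

Definition inLip0 (f : pt -> R) : Prop :=
  f p0 = 0 /\ Rbar_lt (lipnorm inM f) p_infty.

Definition inY (f : pt -> R) : Prop :=
  inLip0 f /\
  is_lim_seq (fun n => real (lipnorm (Sn n) (fun a => f a - f q0 * hfun a))) 0 /\
  locally_flat inV f.

(* The witness is a tent g on a single row S_m far down: g(x, 2^-m) = max(0, 2^-(m+1) - e x)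
   and g = 0 elsewhere.  Its slope 1 is attained vertically, between the left ends of the
   rows m and m+1, and g lies in Y because it vanishes on every other row and on V except at
   the isolated point (0, 2^-m).  Given f in Y of norm 1, for m large f is (1+e)-Lipschitz
   along the rows near S_m (f - f(q) h is small there) and e-flat on V near p.  So when u is
   on S_m with g(u) > 0 and w is close to u, going from u to w through the left column costs f
   at most (1+e)(x_u + x_w) + e |y_u - y_w|, which leaves room for g(u) inside
   (1+eps) d(u, w); when w is far from u, g(u) <= 2^-(m+1) is already below eps d(u, w). *)
From Stdlib Require Import Reals Lra Lia.
From Coquelicot Require Import Coquelicot.
Open Scope R_scope.

Lemma pow2_pos n : 0 < 2 ^ n.
Proof. apply pow_lt; lra. Qed.

Lemma inv_pow2_pos n : 0 < / 2 ^ n.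
Proof. apply Rinv_0_lt_compat, pow2_pos. Qed.

Lemma inv_pow2_S n : / 2 ^ S n = / 2 ^ n / 2.
Proof. simpl. rewrite Rinv_mult. unfold Rdiv. ring. Qed.

Lemma inv_pow2_le_1 n : / 2 ^ n <= 1.
Proof. rewrite <- Rinv_1. apply Rinv_le_contravar; [lra|]. apply pow_R1_Rle; lra. Qed.

Lemma inv_pow2_le k n : (k <= n)%nat -> / 2 ^ n <= / 2 ^ k.
Proof. intros. apply Rinv_le_contravar; [apply pow2_pos|]. apply Rle_pow; [lra|auto]. Qed.

Lemma inv_pow2_dist k m : k <> m -> / 2 ^ S m <= Rabs (/ 2 ^ m - / 2 ^ k).
Proof.
  intros H. rewrite inv_pow2_S. pose proof (inv_pow2_pos m).
  destruct (Nat.lt_gt_cases k m) as [[Hl|Hl] _]; [exact H| |].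
  - pose proof (inv_pow2_le (S k) m Hl) as Hle. rewrite inv_pow2_S in Hle.
    rewrite Rabs_left1; lra.
  - pose proof (inv_pow2_le (S m) k Hl) as Hle. rewrite inv_pow2_S in Hle.
    rewrite Rabs_right; lra.
Qed.

Lemma inv_pow2_inj k m : / 2 ^ k = / 2 ^ m -> k = m.
Proof.
  intros H. destruct (Nat.eq_dec k m) as [|Hkm]; auto.
  pose proof (inv_pow2_dist k m Hkm) as Hd. rewrite H, Rminus_diag, Rabs_R0 in Hd.
  pose proof (inv_pow2_pos (S m)). lra.
Qed.

Lemma inv_pow2_scaled_eventually_lt C D :
  0 < D -> exists M0, forall m, (M0 <= m)%nat -> C * / 2 ^ m < D.
Proof.
  intros HD.
  pose proof (is_lim_seq_scal_l _ C _ (is_lim_seq_geom (/ 2) ltac:(rewrite Rabs_right; lra)))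
    as Hlim.
  apply is_lim_seq_spec in Hlim. destruct (Hlim (mkposreal D HD)) as [M0 HM0].
  exists M0. intros m Hm. specialize (HM0 m Hm). simpl in HM0.
  rewrite Rmult_0_r, Rminus_0_r, pow_inv in HM0. apply Rabs_def2 in HM0. lra.
Qed.

Lemma eventually_forall_lt (P : nat -> nat -> Prop) N :
  (forall i, (i < N)%nat -> exists M0, forall m, (M0 <= m)%nat -> P i m) ->
  exists M0, forall i m, (i < N)%nat -> (M0 <= m)%nat -> P i m.
Proof.
  induction N as [|N IHN]; intros H.
  - exists 0%nat. intros; lia.
  - destruct IHN as [M1 H1]. { intros; apply H; lia. }
    destruct (H N) as [M2 H2]; [lia|]. exists (max M1 M2). intros i m Hi Hm.
    destruct (Nat.eq_dec i N); [subst; apply H2 | apply H1]; lia.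
Qed.

Lemma Sn_coord n a : Sn n a -> 0 <= fst a <= 1 /\ snd a = / 2 ^ n.
Proof.
  intros [k [Hk ->]]. simpl. split; [|reflexivity].
  apply le_INR in Hk. rewrite pow_INR in Hk.
  replace (INR 2) with 2 in Hk by (simpl; lra).
  pose proof (pow2_pos n). pose proof (pos_INR k).
  split.
  - unfold Rdiv. apply Rmult_le_pos; [lra|]. left; apply Rinv_0_lt_compat; lra.
  - apply Rle_div_l; lra.
Qed.

Lemma Sn_left n : Sn n (0, / 2 ^ n).
Proof. exists 0%nat. split; [lia|]. f_equal. simpl. unfold Rdiv. ring. Qed.

Lemma Sn_right n : Sn n (1, / 2 ^ n).
Proof.
  exists (2 ^ n)%nat. split; [lia|]. f_equal. rewrite pow_INR.
  replace (INR 2) with 2 by (simpl; lra). field. pose proof (pow2_pos n); lra.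
Qed.

Lemma Sn_inM n a : (1 <= n)%nat -> Sn n a -> inM a.
Proof. intros. right; right. exists n; auto. Qed.

Lemma inM_coord a : inM a -> 0 <= fst a <= 1 /\ 0 <= snd a <= 1.
Proof.
  intros [->|[->|[n [Hn HS]]]]; simpl; try lra.
  apply Sn_coord in HS. destruct HS as [H1 ->]. split; auto.
  split; [left; apply inv_pow2_pos | apply inv_pow2_le_1].
Qed.

Lemma inM_row m a : inM a -> snd a = / 2 ^ m -> Sn m a.
Proof.
  pose proof (inv_pow2_pos m).
  intros [->|[->|[n [Hn HS]]]] E; simpl in E; try lra.
  pose proof (Sn_coord _ _ HS) as [_ E2]. rewrite E2 in E.
  apply inv_pow2_inj in E. subst; auto.
Qed.

Lemma inM_off_row_dist m b :
  inM b -> snd b <> / 2 ^ m -> / 2 ^ S m <= Rabs (/ 2 ^ m - snd b).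
Proof.
  intros Hb Hne. pose proof (inv_pow2_pos m). rewrite inv_pow2_S.
  destruct Hb as [->|[->|[n [Hn HS]]]]; simpl.
  - rewrite Rminus_0_r, Rabs_right; lra.
  - rewrite Rminus_0_r, Rabs_right; lra.
  - pose proof (Sn_coord _ _ HS) as [_ E2]. rewrite E2 in *.
    rewrite <- inv_pow2_S. apply inv_pow2_dist. intro; subst; auto.
Qed.

Lemma inV_left m : (1 <= m)%nat -> inV (0, / 2 ^ m).
Proof. split; [apply (Sn_inM m); auto using Sn_left | left; reflexivity]. Qed.

Lemma pt_dec (a b : pt) : a = b \/ a <> b.
Proof.
  destruct a as [x1 y1], b as [x2 y2].
  destruct (Req_EM_T x1 x2); destruct (Req_EM_T y1 y2); subst; auto;
  right; intro E; inversion E; auto.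
Qed.

Lemma dM_same_row a b : snd a = snd b -> dM a b = Rabs (fst a - fst b).
Proof. destruct a, b; simpl; intros; destruct Req_EM_T; [reflexivity|contradiction]. Qed.

Lemma dM_other_row a b : snd a <> snd b ->
  dM a b = Rabs (snd a - snd b) + Rmin (fst a + fst b) (2 - (fst a + fst b)).
Proof. destruct a, b; simpl; intros; destruct Req_EM_T; [contradiction|reflexivity]. Qed.

Lemma dM_sym a b : dM a b = dM b a.
Proof.
  destruct (Req_EM_T (snd a) (snd b)).
  - rewrite !dM_same_row; auto. apply Rabs_minus_sym.
  - rewrite !dM_other_row; auto. rewrite Rabs_minus_sym. f_equal. f_equal; ring.
Qed.

Lemma dM_ge_dist_snd a b : inM a -> inM b -> Rabs (snd a - snd b) <= dM a b.
Proof.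
  intros Ha Hb. apply inM_coord in Ha. apply inM_coord in Hb.
  destruct (Req_EM_T (snd a) (snd b)) as [E|E].
  - rewrite dM_same_row, E, Rminus_diag, Rabs_R0; auto. apply Rabs_pos.
  - rewrite dM_other_row; auto.
    assert (0 <= Rmin (fst a + fst b) (2 - (fst a + fst b))) by (apply Rmin_glb; lra).
    lra.
Qed.

Lemma dM_pos a b : inM a -> inM b -> a <> b -> 0 < dM a b.
Proof.
  intros Ha Hb Hab. destruct (Req_EM_T (snd a) (snd b)).
  - rewrite dM_same_row; auto. apply Rabs_pos_lt. intro H. apply Hab.
    destruct a, b; simpl in *. f_equal; lra.
  - eapply Rlt_le_trans; [|apply dM_ge_dist_snd; auto]. apply Rabs_pos_lt. lra.
Qed.

Lemma dM_left_p0 y : 0 <= y -> dM (0, y) p0 = y.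
Proof.
  intros Hy. destruct (Req_EM_T y 0).
  - subst. rewrite dM_same_row by reflexivity. simpl. rewrite Rminus_0_r, Rabs_R0. reflexivity.
  - rewrite dM_other_row by (simpl; auto). simpl. rewrite Rminus_0_r, Rabs_right by lra.
    rewrite Rplus_0_r, Rminus_0_r, Rmin_left by lra. ring.
Qed.

Lemma dM_left_column y y' : 0 <= y -> 0 <= y' -> y <> y' -> dM (0, y) (0, y') = Rabs (y - y').
Proof.
  intros. rewrite dM_other_row by (simpl; auto). simpl.
  rewrite Rplus_0_r, Rminus_0_r, Rmin_left; lra.
Qed.

Lemma dM_close_other_row u w : inM u -> inM w -> snd u <> snd w ->
  fst u <= 1 / 2 -> dM u w < 1 / 2 -> dM u w = Rabs (snd u - snd w) + (fst u + fst w).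
Proof.
  intros Hu Hw Ey Hxu Hclose.
  destruct (inM_coord w Hw) as [Hxw _].
  rewrite dM_other_row in * by auto.
  pose proof (Rabs_pos (snd u - snd w)).
  destruct (Rle_dec (fst u + fst w) (2 - (fst u + fst w))).
  - now rewrite Rmin_left.
  - rewrite Rmin_right in Hclose by lra. lra.
Qed.

Lemma lipnorm_ub A f a b : A a -> A b -> a <> b ->
  Rbar_le (Rabs (f a - f b) / dM a b) (lipnorm A f).
Proof.
  intros. unfold lipnorm.
  destruct (Lub_Rbar_correct (fun r => exists a b, A a /\ A b /\ a <> b /\
                       r = Rabs (f a - f b) / dM a b)) as [Hub _].
  apply Hub. exists a, b. auto.
Qed.

Lemma lipnorm_le A f L : (forall a, A a -> inM a) ->
  (forall a b, A a -> A b -> a <> b -> Rabs (f a - f b) <= L * dM a b) ->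
  Rbar_le (lipnorm A f) L.
Proof.
  intros HA H. unfold lipnorm.
  destruct (Lub_Rbar_correct (fun r => exists a b, A a /\ A b /\ a <> b /\
                       r = Rabs (f a - f b) / dM a b)) as [_ Hl].
  apply Hl. intros r [a [b [Ha [Hb [Hab ->]]]]]. simpl.
  apply Rle_div_l; auto. apply dM_pos; auto.
Qed.

Lemma lipnorm_bound A f B a b : (forall a, A a -> inM a) -> Rbar_le (lipnorm A f) (Finite B) ->
  A a -> A b -> a <> b -> Rabs (f a - f b) <= real (lipnorm A f) * dM a b.
Proof.
  intros HA HB Ha Hb Hab. pose proof (lipnorm_ub A f a b Ha Hb Hab) as H.
  destruct (lipnorm A f); simpl in *; try contradiction.
  apply Rle_div_l in H; auto. apply dM_pos; auto.
Qed.

Lemma lipnorm_1_bound f a b : lipnorm inM f = Finite 1 ->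
  inM a -> inM b -> Rabs (f a - f b) <= dM a b.
Proof.
  intros Hf Ha Hb. destruct (pt_dec a b) as [<-|Hab].
  - rewrite Rminus_diag, Rabs_R0. destruct a as [x y]. rewrite dM_same_row by reflexivity.
    apply Rabs_pos.
  - rewrite <- (Rmult_1_l (dM a b)).
    replace 1 with (real (lipnorm inM f)) by now rewrite Hf.
    apply (lipnorm_bound inM f 1); auto. rewrite Hf. simpl. lra.
Qed.

Lemma lipnorm_Sn_zero n h : (forall a, Sn n a -> h a = 0) -> (1 <= n)%nat ->
  lipnorm (Sn n) h = Finite 0.
Proof.
  intros Hz Hn. apply Rbar_le_antisym.
  - apply lipnorm_le. { intros a Ha; apply (Sn_inM n); auto. }
    intros a b Ha Hb _. rewrite (Hz _ Ha), (Hz _ Hb), Rminus_diag, Rabs_R0, Rmult_0_l. lra.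
  - pose proof (lipnorm_ub (Sn n) h _ _ (Sn_left n) (Sn_right n)
      ltac:(intro E; inversion E; lra)) as H.
    rewrite (Hz _ (Sn_left n)), (Hz _ (Sn_right n)), Rminus_diag, Rabs_R0 in H.
    unfold Rdiv in H. rewrite Rmult_0_l in H. exact H.
Qed.

Definition bump (m : nat) (s : R) (a : pt) : R :=
  if Req_EM_T (snd a) (/ 2 ^ m) then Rmax 0 (/ 2 ^ S m - s * fst a) else 0.

Lemma bump_off_row m s a : snd a <> / 2 ^ m -> bump m s a = 0.
Proof. intros. unfold bump. destruct Req_EM_T; [contradiction|reflexivity]. Qed.

Lemma bump_on_row m s a : snd a = / 2 ^ m -> bump m s a = Rmax 0 (/ 2 ^ S m - s * fst a).
Proof. intros. unfold bump. destruct Req_EM_T; [reflexivity|contradiction]. Qed.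

Lemma bump_range m s a : 0 <= s -> 0 <= fst a -> 0 <= bump m s a <= / 2 ^ S m.
Proof.
  intros. pose proof (inv_pow2_pos (S m)). unfold bump. destruct Req_EM_T; [|lra].
  unfold Rmax. destruct Rle_dec; try lra.
  assert (0 <= s * fst a) by (apply Rmult_le_pos; auto). lra.
Qed.

Lemma Rabs_Rmax0_sub_le x y : Rabs (Rmax 0 x - Rmax 0 y) <= Rabs (x - y).
Proof. unfold Rmax; repeat destruct Rle_dec; unfold Rabs; repeat destruct Rcase_abs; lra. Qed.

Lemma bump_row_lipschitz m s a b : 0 <= s -> snd a = / 2 ^ m -> snd b = / 2 ^ m ->
  Rabs (bump m s a - bump m s b) <= s * Rabs (fst a - fst b).
Proof.
  intros Hs Ea Eb. rewrite !bump_on_row by auto.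
  eapply Rle_trans; [apply Rabs_Rmax0_sub_le|].
  replace (/ 2 ^ S m - s * fst a - (/ 2 ^ S m - s * fst b)) with (s * (fst b - fst a)) by ring.
  rewrite Rabs_mult, Rabs_right, Rabs_minus_sym by lra. lra.
Qed.

Lemma bump_lipnorm m s : 0 < s <= 1 -> (1 <= m)%nat -> lipnorm inM (bump m s) = Finite 1.
Proof.
  intros Hs Hm. apply Rbar_le_antisym.
  - apply lipnorm_le; auto. intros a b Ha Hb Hab. rewrite Rmult_1_l.
    pose proof (inM_coord a Ha). pose proof (inM_coord b Hb).
    destruct (Req_EM_T (snd a) (/ 2 ^ m)) as [Ea|Ea];
    destruct (Req_EM_T (snd b) (/ 2 ^ m)) as [Eb|Eb].
    + rewrite dM_same_row by congruence.
      pose proof (bump_row_lipschitz m s a b ltac:(lra) Ea Eb).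
      pose proof (Rabs_pos (fst a - fst b)). nra.
    + rewrite (bump_off_row m s b), Rminus_0_r by auto.
      pose proof (bump_range m s a). pose proof (inM_off_row_dist m b Hb Eb).
      pose proof (dM_ge_dist_snd a b Ha Hb) as Hdy. rewrite Ea in Hdy.
      rewrite Rabs_right; lra.
    + rewrite (bump_off_row m s a), Rminus_0_l, Rabs_Ropp by auto.
      pose proof (bump_range m s b). pose proof (inM_off_row_dist m a Ha Ea).
      pose proof (dM_ge_dist_snd b a Hb Ha) as Hdy. rewrite Eb in Hdy. rewrite dM_sym.
      rewrite Rabs_right; lra.
    + rewrite !bump_off_row, Rminus_diag, Rabs_R0 by auto.
      left; apply dM_pos; auto.
  - pose proof (inv_pow2_pos m). pose proof (inv_pow2_pos (S m)). pose proof (inv_pow2_S m).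
    assert (Hne : / 2 ^ S m <> / 2 ^ m) by lra.
    pose proof (lipnorm_ub inM (bump m s) (0, / 2 ^ m) (0, / 2 ^ S m)
      (Sn_inM m _ Hm (Sn_left m)) (Sn_inM (S m) _ ltac:(lia) (Sn_left (S m)))
      ltac:(intro E; inversion E; auto)) as Hslope.
    rewrite bump_on_row, bump_off_row, dM_left_column in Hslope by (cbn [snd]; auto; lra).
    simpl fst in Hslope.
    rewrite Rmult_0_r, Rminus_0_r, Rminus_0_r, Rmax_right in Hslope by lra.
    replace (Rabs (/ 2 ^ S m) / Rabs (/ 2 ^ m - / 2 ^ S m)) with 1 in Hslope; [exact Hslope|].
    rewrite !Rabs_right by lra. rewrite inv_pow2_S. field. pose proof (pow2_pos m). lra.
Qed.

Lemma inV_isolated_left m a : (1 <= m)%nat ->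
  inV a -> dM a (0, / 2 ^ m) < / 2 ^ S m -> a = (0, / 2 ^ m).
Proof.
  intros Hm [Ha Hx] Hd.
  destruct (Req_EM_T (snd a) (/ 2 ^ m)) as [Ey|Ey].
  - rewrite dM_same_row in Hd by auto. cbn [fst snd] in Hd. destruct Hx as [Hx|Hx].
    + destruct a; simpl in *; subst; auto.
    + rewrite Hx, Rminus_0_r, Rabs_R1 in Hd. pose proof (inv_pow2_le_1 (S m)). lra.
  - pose proof (inM_off_row_dist m a Ha Ey).
    pose proof (dM_ge_dist_snd a (0, / 2 ^ m) Ha (proj1 (inV_left m Hm))) as Hdy.
    cbn [fst snd] in *. rewrite Rabs_minus_sym in Hdy. lra.
Qed.

Lemma bump_zero_on_V m s a : / 2 ^ S m <= s -> inV a -> a <> (0, / 2 ^ m) -> bump m s a = 0.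
Proof.
  intros Hs [Ha Hx] Hne. destruct (Req_EM_T (snd a) (/ 2 ^ m)).
  - rewrite bump_on_row by auto. destruct Hx as [Hx|Hx].
    + exfalso. apply Hne. destruct a; simpl in *; subst; auto.
    + rewrite Hx. unfold Rmax. destruct Rle_dec; lra.
  - apply bump_off_row; auto.
Qed.

Lemma bump_locally_flat m s : / 2 ^ S m <= s -> (1 <= m)%nat -> locally_flat inV (bump m s).
Proof.
  intros Hs Hm z Hz eps Heps.
  destruct (pt_dec z (0, / 2 ^ m)) as [->|Ez].
  - exists (/ 2 ^ S m). split; [apply inv_pow2_pos|].
    intros a b Ha Hb Hab Hda Hdb. exfalso. apply Hab.
    now rewrite (inV_isolated_left m a), (inV_isolated_left m b).
  - exists (dM (0, / 2 ^ m) z).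
    split; [apply dM_pos; auto; [apply inV_left | apply Hz]; auto|].
    intros a b Ha Hb Hab Hda Hdb.
    rewrite (bump_zero_on_V m s a), (bump_zero_on_V m s b), Rminus_diag; auto;
      try (intro E; subst; lra).
    unfold Rdiv. rewrite Rmult_0_l, Rabs_R0. lra.
Qed.

Lemma bump_inY m s : 0 < s <= 1 -> / 2 ^ S m <= s -> (1 <= m)%nat -> inY (bump m s).
Proof.
  intros Hs Hts Hm. pose proof (inv_pow2_pos m).
  assert (Hq : bump m s q0 = 0) by (apply bump_off_row; simpl; lra).
  split; [split|split].
  - apply bump_off_row; simpl; lra.
  - rewrite bump_lipnorm; simpl; auto.
  - apply is_lim_seq_ext_loc with (u := fun _ => 0); [|apply is_lim_seq_const].
    exists (S m). intros n Hn. rewrite Hq, lipnorm_Sn_zero; [reflexivity| |lia].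
    intros a Ha. destruct (Sn_coord _ _ Ha) as [_ E].
    rewrite bump_off_row; [ring|]. rewrite E. intro E'. apply inv_pow2_inj in E'. lia.
  - apply bump_locally_flat; auto.
Qed.

Definition row_control (f : pt -> R) (e : R) (K : nat) : Prop :=
  forall k, (K <= k)%nat -> forall a b, Sn k a -> Sn k b ->
    Rabs (f a - f b) <= (1 + e) * Rabs (fst a - fst b).

Definition flat_control (f : pt -> R) (e delta : R) : Prop :=
  forall a b, inV a -> inV b -> a <> b -> dM a p0 < delta -> dM b p0 < delta ->
    Rabs (f a - f b) <= e * dM a b.

Lemma lipnorm_1_at_q0 f : f p0 = 0 -> lipnorm inM f = Finite 1 -> Rabs (f q0) <= 1.
Proof.
  intros Hf0 Hf1.
  pose proof (lipnorm_1_bound f p0 q0 Hf1 ltac:(left; auto) ltac:(right; left; auto)) as H.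
  rewrite dM_same_row in H by reflexivity. simpl in H.
  rewrite Hf0, Rminus_0_l, Rabs_Ropp in H. replace (Rabs (0 - 1)) with 1 in H; [lra|].
  rewrite Rminus_0_l, Rabs_Ropp, Rabs_R1. reflexivity.
Qed.

Lemma inY_row_control f e : inY f -> lipnorm inM f = Finite 1 -> 0 < e ->
  exists K, row_control f e K.
Proof.
  intros [[Hf0 _] [Hlim _]] Hf1 He.
  pose proof (lipnorm_1_at_q0 f Hf0 Hf1) as Hq.
  apply is_lim_seq_spec in Hlim. destruct (Hlim (mkposreal e He)) as [N1 HN1]. simpl in HN1.
  exists (max N1 1). intros k Hk a b Ha Hb.
  destruct (pt_dec a b) as [<-|Hab]; [rewrite !Rminus_diag, Rabs_R0; lra|].
  assert (HSM : forall a, Sn k a -> inM a) by (intros; apply (Sn_inM k); auto; lia).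
  set (f' := fun a => f a - f q0 * hfun a).
  assert (Hrow : forall x y, Sn k x -> Sn k y -> dM x y = Rabs (fst x - fst y)).
  { intros x y Hx Hy. apply dM_same_row.
    now rewrite (proj2 (Sn_coord _ _ Hx)), (proj2 (Sn_coord _ _ Hy)). }
  assert (Hf'2 : Rbar_le (lipnorm (Sn k) f') (Finite 2)).
  { apply lipnorm_le; auto. intros x y Hx Hy Hxy.
    pose proof (lipnorm_1_bound f x y Hf1 (HSM x Hx) (HSM y Hy)).
    unfold f', hfun. replace (f x - f q0 * fst x - (f y - f q0 * fst y)) with
      ((f x - f y) - f q0 * (fst x - fst y)) by ring.
    eapply Rle_trans; [apply Rabs_triang|]. rewrite Rabs_Ropp, Rabs_mult, <- Hrow by auto.
    pose proof (dM_pos x y (HSM x Hx) (HSM y Hy) Hxy). nra. }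
  pose proof (lipnorm_bound (Sn k) f' 2 a b HSM Hf'2 Ha Hb Hab) as Hab'.
  pose proof (HN1 k ltac:(lia)) as Hsmall. rewrite Rminus_0_r in Hsmall.
  apply Rabs_def2 in Hsmall. rewrite Hrow in Hab' by auto.
  replace (f a - f b) with ((f' a - f' b) + f q0 * (fst a - fst b)) by (unfold f', hfun; ring).
  eapply Rle_trans; [apply Rabs_triang|]. rewrite Rabs_mult.
  pose proof (Rabs_pos (fst a - fst b)). fold f' in Hsmall. nra.
Qed.

Lemma inY_flat_control f e : inY f -> 0 < e -> exists delta, 0 < delta /\ flat_control f e delta.
Proof.
  intros [_ [_ Hflat]] He.
  destruct (Hflat p0 ltac:(split; [left | left]; auto) e He) as [delta [Hdel Hfl]].
  exists delta. split; auto. intros a b Ha Hb Hab Ha' Hb'.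
  pose proof (dM_pos a b (proj1 Ha) (proj1 Hb) Hab).
  pose proof (Hfl a b Ha Hb Hab Ha' Hb') as H'. unfold Rdiv in H'.
  rewrite Rabs_mult, Rabs_inv, (Rabs_right (dM a b)) in H' by lra.
  apply Rle_div_l in H'; auto.
Qed.

Section PairEstimate.

Variables (eps e delta : R) (m K : nat) (f : pt -> R).
Hypotheses (Heps : 0 < eps) (He : 0 < e) (He2 : 2 * e <= eps)
  (Hf1 : lipnorm inM f = Finite 1) (Hrow : row_control f e K) (Hflat : flat_control f e delta)
  (Hm : (1 <= m)%nat) (HKm : (K <= m)%nat)
  (Hdelta : / 2 ^ m + / 2 ^ S m / eps <= delta) (HK : / 2 ^ m + / 2 ^ S m / eps <= / 2 ^ K)
  (He_small : / 2 ^ S m / e <= 1 / 2) (Heps_small : / 2 ^ S m / eps <= 1 / 2).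

Lemma row_to_left k a : (K <= k)%nat -> Sn k a -> Rabs (f a - f (0, / 2 ^ k)) <= (1 + e) * fst a.
Proof.
  intros Hk Ha. pose proof (Sn_coord _ _ Ha) as [Hx _].
  assert (Ex : Rabs (fst a - fst (0, / 2 ^ k)) = fst a)
    by (simpl; rewrite Rminus_0_r, Rabs_right; lra).
  rewrite <- Ex. apply (Hrow k); auto using Sn_left.
Qed.

(* The path u -> (0, snd u) -> (0, snd w) -> w: two row segments and one flat step in V near p. *)
Lemma close_off_row_estimate u w : inM u -> inM w -> snd u = / 2 ^ m -> snd w <> / 2 ^ m ->
  fst u <= 1 / 2 -> dM u w < / 2 ^ S m / eps ->
  Rabs (f u - f w) <= (1 + e) * (fst u + fst w) + e * Rabs (snd u - snd w).
Proof.
  intros Hu Hw Eu Ew Hxu Hclose.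
  pose proof (inv_pow2_pos m). pose proof (inv_pow2_pos (S m)).
  assert (0 < / 2 ^ S m / eps) by (apply Rdiv_lt_0_compat; lra).
  destruct (inM_coord u Hu) as [Hxu0 _]. destruct (inM_coord w Hw) as [Hxw Hyw].
  pose proof (dM_close_other_row u w Hu Hw ltac:(congruence) Hxu ltac:(lra)) as Ed.
  assert (Hyw2 : snd w < / 2 ^ m + / 2 ^ S m / eps).
  { rewrite <- Eu. pose proof (Rabs_pos (snd u - snd w)).
    pose proof (Rle_abs (snd w - snd u)) as Hle. rewrite Rabs_minus_sym in Hle. lra. }
  assert (Hw_left : inV (0, snd w) /\ Rabs (f w - f (0, snd w)) <= (1 + e) * fst w).
  { destruct Hw as [->|[->|[k [Hk HS]]]].
    - split; [split; [left| left]; auto|]. rewrite Rminus_diag, Rabs_R0. simpl; lra.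
    - exfalso. rewrite Ed in Hclose. pose proof (Rabs_pos (snd u - snd q0)).
      cbn [fst q0] in *. lra.
    - pose proof (Sn_coord _ _ HS) as [_ Ek]. rewrite Ek in *.
      split; [apply inV_left; auto|]. apply row_to_left; auto.
      destruct (Nat.le_gt_cases K k) as [|Hlt]; auto.
      pose proof (inv_pow2_le k K ltac:(lia)). lra. }
  destruct Hw_left as [HvV Hwv].
  assert (Hcol : Rabs (f (0, / 2 ^ m) - f (0, snd w)) <= e * Rabs (snd u - snd w)).
  { rewrite Eu, <- (dM_left_column (/ 2 ^ m) (snd w)) by (congruence || lra).
    apply Hflat; auto using inV_left; [intro E; inversion E; auto| |];
      rewrite dM_left_p0; lra. }
  assert (Hu_left : Rabs (f u - f (0, / 2 ^ m)) <= (1 + e) * fst u).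
  { apply row_to_left; auto. apply inM_row; auto. }
  replace (f u - f w) with
    ((f u - f (0, / 2 ^ m)) + (f (0, / 2 ^ m) - f (0, snd w)) - (f w - f (0, snd w))) by ring.
  unfold Rminus at 1. eapply Rle_trans; [apply Rabs_triang|]. rewrite Rabs_Ropp.
  pose proof (Rabs_triang (f u - f (0, / 2 ^ m)) (f (0, / 2 ^ m) - f (0, snd w))). lra.
Qed.

Lemma pair_estimate_off_row u w : inM u -> inM w -> snd u = / 2 ^ m -> snd w <> / 2 ^ m ->
  Rabs (f u - f w) + bump m e u <= (1 + eps) * dM u w.
Proof.
  intros Hu Hw Eu Ew.
  pose proof (inv_pow2_pos (S m)).
  assert (Huw : u <> w) by (intro; subst; auto).
  pose proof (lipnorm_1_bound f u w Hf1 Hu Hw).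
  pose proof (dM_pos u w Hu Hw Huw).
  destruct (inM_coord u Hu) as [Hxu _]. destruct (inM_coord w Hw) as [Hxw _].
  rewrite bump_on_row by auto.
  destruct (Rle_dec (/ 2 ^ S m - e * fst u) 0) as [Hg|Hg].
  { rewrite Rmax_left by lra. nra. }
  rewrite Rmax_right by lra.
  assert (Hxu2 : fst u < / 2 ^ S m / e) by (apply Rlt_div_r; [lra | rewrite Rmult_comm; lra]).
  set (r := / 2 ^ S m / eps) in *.
  assert (Htr : / 2 ^ S m = eps * r)
    by (unfold r; field; pose proof (pow2_pos (S m)); split; lra).
  assert (0 <= e * fst u) by (apply Rmult_le_pos; lra).
  destruct (Rle_dec r (dM u w)) as [Hfar|Hclose].
  { assert (eps * r <= eps * dM u w) by (apply Rmult_le_compat_l; lra). lra. }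
  apply Rnot_le_lt in Hclose.
  pose proof (inM_off_row_dist m w Hw Ew) as Hdy. rewrite <- Eu in Hdy.
  pose proof (close_off_row_estimate u w Hu Hw Eu Ew ltac:(lra) Hclose).
  rewrite (dM_close_other_row u w Hu Hw ltac:(congruence) ltac:(lra) ltac:(lra)).
  set (dy := Rabs (snd u - snd w)) in *.
  assert (0 <= (eps - e) * fst u) by (apply Rmult_le_pos; lra).
  assert (0 <= (eps - e) * fst w) by (apply Rmult_le_pos; lra).
  assert (0 <= (eps - e) * dy) by (apply Rmult_le_pos; lra).
  nra.
Qed.

Lemma pair_estimate u w : inM u -> inM w ->
  Rabs (f u - f w) + Rabs (bump m e u - bump m e w) <= (1 + eps) * dM u w.
Proof.
  intros Hu Hw. destruct (pt_dec u w) as [<-|Huw].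
  { rewrite !Rminus_diag, Rabs_R0, Rplus_0_r.
    destruct u; rewrite dM_same_row, Rminus_diag, Rabs_R0 by reflexivity. lra. }
  pose proof (lipnorm_1_bound f u w Hf1 Hu Hw).
  pose proof (dM_pos u w Hu Hw Huw).
  destruct (inM_coord u Hu) as [Hxu _]. destruct (inM_coord w Hw) as [Hxw _].
  destruct (Req_EM_T (snd u) (/ 2 ^ m)) as [Eu|Eu];
  destruct (Req_EM_T (snd w) (/ 2 ^ m)) as [Ew|Ew].
  - pose proof (bump_row_lipschitz m e u w ltac:(lra) Eu Ew).
    pose proof (Hrow m HKm u w (inM_row m u Hu Eu) (inM_row m w Hw Ew)).
    rewrite dM_same_row in * by congruence.
    pose proof (Rabs_pos (fst u - fst w)). nra.
  - rewrite (bump_off_row m e w), Rminus_0_r by auto.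
    destruct (bump_range m e u ltac:(lra) ltac:(lra)).
    rewrite (Rabs_right (bump m e u)) by lra.
    apply pair_estimate_off_row; auto.
  - rewrite (bump_off_row m e u), Rminus_0_l, Rabs_Ropp by auto.
    destruct (bump_range m e w ltac:(lra) ltac:(lra)).
    rewrite (Rabs_right (bump m e w)) by lra.
    rewrite Rabs_minus_sym, dM_sym. apply pair_estimate_off_row; auto.
  - rewrite !bump_off_row, Rminus_diag, Rabs_R0 by auto. nra.
Qed.

End PairEstimate.

Lemma lipnorm_plus_minus_le f g L :
  (forall u w, inM u -> inM w -> Rabs (f u - f w) + Rabs (g u - g w) <= L * dM u w) ->
  Rbar_le (lipnorm inM (fun a => f a + g a)) L /\
  Rbar_le (lipnorm inM (fun a => f a - g a)) L.
Proof.
  intros H. split; apply lipnorm_le; auto; intros u w Hu Hw _;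
    eapply Rle_trans, (H u w Hu Hw).
  - replace (f u + g u - (f w + g w)) with ((f u - f w) + (g u - g w)) by ring.
    apply Rabs_triang.
  - replace (f u - g u - (f w - g w)) with ((f u - f w) + - (g u - g w)) by ring.
    rewrite <- (Rabs_Ropp (g u - g w)). apply Rabs_triang.
Qed.

Lemma inv_pow2_S_div m c : 0 < c -> / 2 ^ S m / c = / (2 * c) * / 2 ^ m.
Proof. intros. rewrite inv_pow2_S. pose proof (pow2_pos m). field. lra. Qed.

Definition admissible_scale (f : pt -> R) (eps e : R) (m : nat) : Prop :=
  exists K delta, row_control f e K /\ flat_control f e delta /\ (K <= m)%nat /\
    / 2 ^ m + / 2 ^ S m / eps <= delta /\ / 2 ^ m + / 2 ^ S m / eps <= / 2 ^ K.

Lemma eventually_admissible_scale f eps e : inY f -> lipnorm inM f = Finite 1 ->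
  0 < eps -> 0 < e -> exists M0, forall m, (M0 <= m)%nat -> admissible_scale f eps e m.
Proof.
  intros Hf Hf1 Heps He.
  destruct (inY_row_control f e Hf Hf1 He) as [K HK].
  destruct (inY_flat_control f e Hf He) as [delta [Hdel Hflat]].
  set (C := 1 + / (2 * eps)).
  assert (HC : forall m, / 2 ^ m + / 2 ^ S m / eps = C * / 2 ^ m)
    by (intros; rewrite inv_pow2_S_div by lra; unfold C; ring).
  destruct (inv_pow2_scaled_eventually_lt C delta Hdel) as [Ma HMa].
  destruct (inv_pow2_scaled_eventually_lt C (/ 2 ^ K) (inv_pow2_pos K)) as [Mb HMb].
  exists (max K (max Ma Mb)). intros m Hm. exists K, delta.
  rewrite HC. repeat split; auto; try lia; left; [apply HMa | apply HMb]; lia.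
Qed.

Lemma eventually_small_scale eps e : 0 < eps -> 0 < e -> exists M0, forall m, (M0 <= m)%nat ->
  / 2 ^ S m <= e /\ / 2 ^ S m / e <= 1 / 2 /\ / 2 ^ S m / eps <= 1 / 2.
Proof.
  intros Heps He.
  destruct (inv_pow2_scaled_eventually_lt (/ 2) e He) as [Ma HMa].
  destruct (inv_pow2_scaled_eventually_lt (/ (2 * e)) (1 / 2) ltac:(lra)) as [Mb HMb].
  destruct (inv_pow2_scaled_eventually_lt (/ (2 * eps)) (1 / 2) ltac:(lra)) as [Mc HMc].
  exists (max Ma (max Mb Mc)). intros m Hm.
  rewrite !inv_pow2_S_div by lra.
  repeat split; left; [| apply HMb | apply HMc]; try lia.
  rewrite inv_pow2_S. unfold Rdiv. rewrite Rmult_comm. apply HMa. lia.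
Qed.

Theorem proposition2p6 :
  forall (N : nat) (fs : nat -> pt -> R),
    (forall i, (i < N)%nat -> inY (fs i) /\ lipnorm inM (fs i) = Finite 1) ->
    forall eps : R, 0 < eps ->
    exists g : pt -> R,
      inY g /\ lipnorm inM g = Finite 1 /\
      forall i, (i < N)%nat ->
        Rbar_le (lipnorm inM (fun a => fs i a + g a)) (Finite (1 + eps)) /\
        Rbar_le (lipnorm inM (fun a => fs i a - g a)) (Finite (1 + eps)).
Proof.
  intros N fs Hfs eps Heps.
  set (e := Rmin eps 1 / 2).
  assert (He : 0 < e <= 1 /\ 2 * e <= eps).
  { unfold e. pose proof (Rmin_l eps 1). pose proof (Rmin_r eps 1).
    assert (0 < Rmin eps 1) by (apply Rmin_glb_lt; lra). lra. }
  destruct (eventually_forall_lt (fun i => admissible_scale (fs i) eps e) N) as [M0 HM0].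
  { intros i Hi. destruct (Hfs i Hi).
    apply eventually_admissible_scale; auto; lra. }
  destruct (eventually_small_scale eps e Heps ltac:(lra)) as [M1 HM1].
  set (m := max (max M0 M1) 1).
  assert (Hm : (1 <= m)%nat /\ (M0 <= m)%nat /\ (M1 <= m)%nat) by (unfold m; lia).
  destruct (HM1 m ltac:(lia)) as [Hte [He_small Heps_small]].
  exists (bump m e). split; [|split].
  - apply bump_inY; tauto.
  - apply bump_lipnorm; tauto.
  - intros i Hi. apply lipnorm_plus_minus_le. intros u w Hu Hw.
    destruct (HM0 i m Hi ltac:(lia)) as [K [delta [Hrow [Hflat [HKm [Hdelta HK]]]]]].
    apply (pair_estimate eps e delta m K); try tauto. apply Hfs, Hi.
Qed.
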